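(* Let $\mathcal{D}=\mathrm{diag}(u_1,\dots,u_n)$ with all $u_j\neq0$, and let $\mathcal{N}=V_r^{-*}\mathcal{D}^*\mathcal{D}V_r^{-1}$. Then for all integers $\nu_1,\nu_2\ge0$ and every integer $k\ge1$, $$\rho\big(E_{\rm TG}^{\nu_1,\nu_2}(P_\sharp,R_\sharp)\big)=\big\|[E_{\rm TG}^{\nu_1,\nu_2}(P_\sharp,R_\sharp)]^k\big\|_{\mathcal N}^{1/k}=\big\|E_{\rm TG}^{\nu_1,\nu_2}(P_\sharp,R_\sharp)\big\|_{\mathcal N}=\begin{cases}|1-\lambda_{n_c+1}|^{\nu_1+\nu_2},& n_c<n,\\ 0,& n_c=n.\end{cases}$$
   Context: Let $A,M\in\mathbb{C}^{n\times n}$ be nonsingular with $M^{-1}A$ and $M^{-*}A^*$ diagonalizable. Let $V_r=[\bm v_{r,1},\dots,\bm v_{r,n}]$ and $V_l=[\bm v_{l,1},\dots,\bm v_{l,n}]$ be invertible matrices of right and left generalized eigenvectors of the pencil $(A,M)$, i.e. $AV_r=MV_r\Lambda$ and $V_l^*A=\Lambda V_l^*M$ with $\Lambda=\mathrm{diag}(\lambda_1,\dots,\lambda_n)$, chosen so that $V_l^*AV_r$ and $V_l^*MV_r$ are diagonal, and ordered so that $|1-\lambda_1|\ge\cdots\ge|1-\lambda_n|\ge0$. Fix $n_c\in\{1,\dots,n\}$. For $P,R\in\mathbb{C}^{n\times n_c}$ with $R^*AP$ invertible, $\Pi(P,R)=P(R^*AP)^{-1}R^*A$ and $E_{\rm TG}^{\nu_1,\nu_2}(P,R)=(I-M^{-1}A)^{\nu_2}(I-\Pi(P,R))(I-M^{-1}A)^{\nu_1}$.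 $P_\sharp,R_\sharp\in\mathbb{C}^{n\times n_c}$ are any matrices with $\mathrm{range}(P_\sharp)=\mathrm{span}\{\bm v_{r,1},\dots,\bm v_{r,n_c}\}$, $\mathrm{range}(R_\sharp)=\mathrm{span}\{\bm v_{l,1},\dots,\bm v_{l,n_c}\}$. For Hermitian positive definite $\mathcal N$, $\|x\|_{\mathcal N}=(x^*\mathcal Nx)^{1/2}$ and $\|Z\|_{\mathcal N}=\max_{x\neq0}\|Zx\|_{\mathcal N}/\|x\|_{\mathcal N}$; $\rho$ is the spectral radius. *)

From HB Require Import structures.
From mathcomp Require Import all_boot all_order all_algebra.
Set Implicit Arguments. Unset Strict Implicit. Unset Printing Implicit Defensive.
Import Order.TTheory GRing.Theory Num.Theory.
Local Open Scope ring_scope.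
Local Open Scope sesquilinear_scope.

(* Complex scalars: an arbitrary numClosedFieldType C (e.g. complex R for R : realType). *)

Definition vnormN {C : numClosedFieldType} n (N : 'M[C]_n) (x : 'cV[C]_n) : C :=
  sqrtC ((x ^t* *m N *m x) 0 0).

Definition is_opnormN {C : numClosedFieldType} n (N Z : 'M[C]_n) (c : C) : Prop :=
  (forall x : 'cV[C]_n, x != 0 -> vnormN N (Z *m x) / vnormN N x <= c) /\
  (exists2 x : 'cV[C]_n, x != 0 & vnormN N (Z *m x) / vnormN N x = c).

Definition is_specrad {C : numClosedFieldType} n (Z : 'M[C]_n) (r : C) : Prop :=
  (forall a, eigenvalue Z a -> `|a| <= r) /\ (exists2 a, eigenvalue Z a & `|a| = r).

Definition PiTG {C : numClosedFieldType} n nc (A : 'M[C]_n) (P R : 'M[C]_(n, nc)) : 'M[C]_n :=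
  P *m invmx (R ^t* *m A *m P) *m (R ^t* *m A).

Definition ETG {C : numClosedFieldType} n nc (A M : 'M[C]_n) (nu1 nu2 : nat)
  (P R : 'M[C]_(n, nc)) : 'M[C]_n :=
  (1%:M - invmx M *m A) ^+ nu2 *m (1%:M - PiTG A P R) *m (1%:M - invmx M *m A) ^+ nu1.

(* span{ v_1, ..., v_nc } where v_j is the j-th (0-indexed j < nc) column of V,
   represented as a row space (of the transposed columns) *)
Definition first_cols_span {C : numClosedFieldType} n (nc : nat) (V : 'M[C]_n) :=
  (\sum_(j < n | (j < nc)%N) <<row j V^T>>)%MS.

(* |1 - lambda_{nc+1}|^(nu) if nc < n (1-indexed lambda_{nc+1} = lam at 0-index nc),
   and 0 if nc = n *)
Definition tg_rate {C : numClosedFieldType} n (nc : nat) (lam : 'I_n -> C) (nu : nat) : C :=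
  match (insub nc : option 'I_n) with
  | Some i => `|1 - lam i| ^+ nu
  | None => 0
  end.

From HB Require Import structures.
From mathcomp Require Import all_boot all_order all_algebra.
Set Implicit Arguments. Unset Strict Implicit. Unset Printing Implicit Defensive.
Import Order.TTheory GRing.Theory Num.Theory.
Local Open Scope ring_scope.
Local Open Scope sesquilinear_scope.

(* In the basis of right eigenvectors V_r, M^{-1}A is diag(lambda) and the coarse
   correction Pi(P#, R#) is the coordinate projector pid_mx nc: after a change of
   basis inside range(P#) and range(R#), R#^* A P# is the leading nc x nc block of
   the diagonal matrix V_l^* A V_r.  Hence E is similar to the diagonal matrix with
   entries (1 - lambda_i)^(nu1 + nu2) for i > nc and 0 otherwise.  The N-norm is the
   Euclidean norm after the change of variables W = D V_r^{-1}, and W conjugates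
   every power of E to a diagonal matrix, so spectral radius and operator norms are
   all the largest modulus of a diagonal entry, |1 - lambda_{nc+1}|^(nu1 + nu2) by
   the ordering of the eigenvalues. *)

Section MatrixFacts.
Variable F : fieldType.

Lemma invmxM n (A B : 'M[F]_n) : A \in unitmx -> B \in unitmx ->
  invmx (A *m B) = invmx B *m invmx A.
Proof.
move=> Au Bu; have ABu : A *m B \in unitmx by rewrite unitmx_mul Au Bu.
have -> : invmx B *m invmx A = invmx (A *m B) *m (A *m B) *m (invmx B *m invmx A).
  by rewrite mulVmx // mul1mx.
by rewrite !mulmxA mulmxK // mulmxK.
Qed.

Lemma pid_mx_diag n r : pid_mx r = diag_mx (\row_i ((i < r)%N%:R : F)) :> 'M_n.
Proof.
apply/matrixP=> i j; rewrite !mxE.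
by rewrite -val_eqE; case: (val i == val j); rewrite ?mulr1n ?mulr0n.
Qed.

Lemma subr_diag_mx n (d : 'I_n -> F) :
  1%:M - diag_mx (\row_i d i) = diag_mx (\row_i (1 - d i)).
Proof.
apply/matrixP=> i j; rewrite !mxE.
by case: (i == j); rewrite ?mulr1n ?mulr0n ?subrr.
Qed.

Lemma expr_diag_mx n (d : 'I_n -> F) k :
  diag_mx (\row_i d i) ^+ k = diag_mx (\row_i d i ^+ k).
Proof.
elim: k => [|k IHk].
  rewrite expr0 -[1]/(1%:M : 'M[F]_n) -diag_const_mx.
  by congr diag_mx; apply/rowP=> j; rewrite !mxE.
by rewrite exprS IHk -mulmxE mulmx_diag; congr diag_mx; apply/rowP=> j; rewrite !mxE exprS.
Qed.

Lemma diag_mx_unit n (d : 'I_n -> F) :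
  (forall i, d i != 0) -> diag_mx (\row_i d i) \in unitmx.
Proof.
move=> d_neq0; rewrite unitmxE det_diag unitfE.
by apply/prodf_neq0=> i _; rewrite mxE d_neq0.
Qed.

Lemma is_diag_mx_pidC n r (G : 'M[F]_n) :
  is_diag_mx G -> G *m pid_mx r = pid_mx r *m G.
Proof. by case/diag_mxP=> d ->; rewrite pid_mx_diag diag_mxC. Qed.

Lemma expr_conjmx n (V X : 'M[F]_n) k : V \in unitmx ->
  (V *m X *m invmx V) ^+ k = V *m X ^+ k *m invmx V.
Proof.
move=> Vu; elim: k => [|k IHk]; first by rewrite !expr0 mulmx1 mulmxV.
by rewrite !exprS IHk -!mulmxE !mulmxA mulmxKV.
Qed.

Lemma subr_conjmx n (V X : 'M[F]_n) : V \in unitmx ->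
  1%:M - V *m X *m invmx V = V *m (1%:M - X) *m invmx V.
Proof. by move=> Vu; rewrite mulmxBr mulmxBl mulmx1 mulmxV. Qed.

Lemma eigenvalue_diag_mx n (e : 'I_n -> F) a :
  eigenvalue (diag_mx (\row_i e i)) a = (a \in codom e).
Proof.
rewrite eigenvalue_root_char char_poly_trig ?diag_mx_is_trig //.
rewrite (eq_bigr (fun i => 'X - (e i)%:P)) => [|i _]; last by rewrite !mxE eqxx mulr1n.
rewrite -(big_map e xpredT (fun a => 'X - a%:P)) root_prod_XsubC.
by apply/mapP/codomP=> [[i _ ->]|[i ->]]; [exists i | exists i; rewrite ?mem_index_enum].
Qed.

Lemma eigenvalue_conj n (V f : 'M[F]_n) : V \in unitmx ->
  eigenvalue (V *m f *m invmx V) =1 eigenvalue f.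
Proof.
move=> Vu a; rewrite -(conjumx f Vu); apply/idP/idP.
  by apply: eigenvalue_conjmx; rewrite ?stablemx_unit ?row_free_unit.
rewrite -{1}(conjmxK f Vu); apply: eigenvalue_conjmx.
  by rewrite stablemx_unit ?unitmx_inv.
by rewrite row_free_unit unitmx_inv.
Qed.

End MatrixFacts.

Lemma trmxC_mul (C : numClosedFieldType) m n p (A : 'M[C]_(m, n)) (B : 'M[C]_(n, p)) :
  (A *m B) ^t* = B ^t* *m A ^t*.
Proof. by rewrite trmx_mul map_mxM. Qed.

Section CoarseSpaces.
Variables (C : numClosedFieldType) (n nc : nat).
Hypothesis ncn : (nc <= n)%N.
Implicit Types (A G V Vr Vl : 'M[C]_n) (P R : 'M[C]_(n, nc)).

Notation q := (pid_mx nc : 'M[C]_(n, nc)).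
Notation p := (pid_mx nc : 'M[C]_(nc, n)).

Lemma first_cols_spanE V : (first_cols_span nc V == p *m V^T)%MS.
Proof.
rewrite (pid_mxErow _ ncn) -rowsubE; apply/andP; split.
  apply/sumsmx_subP=> j ltj; rewrite genmxE.
  have -> : row j V^T = row (widen_ord ncn (Ordinal ltj)) V^T by congr row; apply: val_inj.
  by rewrite -row_rowsub row_sub.
apply/row_subP=> i; rewrite row_rowsub.
by apply: (sumsmx_sup (widen_ord ncn i)); rewrite ?genmxE /=.
Qed.

Lemma first_cols_span_basis V P : V \in unitmx -> (P^T == first_cols_span nc V)%MS ->
  exists2 X : 'M[C]_nc, X \in unitmx & P = V *m q *m X.
Proof.
move=> Vu PV; set B := p *m V^T.
have PB : (P^T :=: B)%MS := eqmx_trans (eqmxP PV) (eqmxP (first_cols_spanE V)).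
have rkB : \rank B = nc by rewrite mxrankMfree ?row_free_unit ?unitmx_tr // rank_pid_mx.
have /submxP[D defP] : (P^T <= B)%MS by rewrite PB.
exists D^T.
  have freeB : row_free B by rewrite /row_free rkB.
  by rewrite unitmx_tr -row_free_unit /row_free -(mxrankMfree _ freeB) -defP PB rkB.
by rewrite -[P]trmxK defP !trmx_mul trmxK tr_pid_mx.
Qed.

Lemma PiTG_mulmx_unit A P R (X Y : 'M[C]_nc) :
  R ^t* *m A *m P \in unitmx -> X \in unitmx -> Y \in unitmx ->
  PiTG A (P *m X) (R *m Y) = PiTG A P R.
Proof.
move=> Ku Xu Yu; have Y'u : Y ^t* \in unitmx by rewrite map_unitmx unitmx_tr.
rewrite /PiTG.
have -> : (R *m Y) ^t* *m A *m (P *m X) = Y ^t* *m (R ^t* *m A *m P) *m X.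
  by rewrite trmxC_mul !mulmxA.
rewrite invmxM ?unitmx_mul ?Y'u // invmxM // trmxC_mul.
by rewrite !mulmxA mulmxKV // mulmxK.
Qed.

Lemma pid_compress_unit G : G \in unitmx -> G *m pid_mx nc = pid_mx nc *m G ->
  p *m G *m q \in unitmx.
Proof.
move=> Gu GC; suff /mulmx1_unit[] : p *m G *m q *m (p *m invmx G *m q) = 1%:M by [].
rewrite !mulmxA -[p *m G *m q *m p]mulmxA pid_mx_id // -[p *m G *m _]mulmxA GC.
by rewrite !mulmxA pid_mx_id // mulmxK // pid_mx_id // pid_mx_1.
Qed.

Lemma pid_compressK G : G \in unitmx -> G *m pid_mx nc = pid_mx nc *m G ->
  q *m invmx (p *m G *m q) *m (p *m G) = pid_mx nc.
Proof.
move=> Gu GC; have pG : p *m G = p *m G *m q *m p.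
  by rewrite -mulmxA pid_mx_id // -mulmxA GC mulmxA pid_mx_id.
by rewrite {2}pG mulmxA mulmxKV ?pid_compress_unit // pid_mx_id.
Qed.

Lemma PiTG_first_cols A Vr Vl P R :
  A \in unitmx -> Vr \in unitmx -> Vl \in unitmx -> is_diag_mx (Vl ^t* *m A *m Vr) ->
  (P^T == first_cols_span nc Vr)%MS -> (R^T == first_cols_span nc Vl)%MS ->
  PiTG A P R = Vr *m pid_mx nc *m invmx Vr.
Proof.
move=> Au Vru Vlu Gd PVr RVl; set G := Vl ^t* *m A *m Vr in Gd.
have Gu : G \in unitmx by rewrite !unitmx_mul map_unitmx unitmx_tr Vlu Au Vru.
have GC := is_diag_mx_pidC nc Gd.
have [X Xu ->] := first_cols_span_basis Vru PVr.
have [Y Yu ->] := first_cols_span_basis Vlu RVl.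
have RA : (Vl *m q) ^t* *m A = p *m G *m invmx Vr.
  by rewrite trmxC_mul tr_pid_mx map_pid_mx /G !mulmxA mulmxK.
have RAP : (Vl *m q) ^t* *m A *m (Vr *m q) = p *m G *m q.
  by rewrite RA !mulmxA mulmxKV.
rewrite PiTG_mulmx_unit ?RAP ?pid_compress_unit // /PiTG RAP RA.
by rewrite -(pid_compressK Gu GC) !mulmxA.
Qed.

End CoarseSpaces.

Section TwoGridSpectrum.
Variables (C : numClosedFieldType) (n nc : nat).

(* Index i is 0-based: lambda_{i+1} survives the coarse correction iff i >= nc. *)
Definition tg_eigen (lam : 'I_n -> C) (nu : nat) (i : 'I_n) : C :=
  (nc <= i)%N%:R * (1 - lam i) ^+ nu.

Lemma ETG_similar (A M V L Q : 'M[C]_n) (P R : 'M[C]_(n, nc)) nu1 nu2 :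
  V \in unitmx -> invmx M *m A = V *m L *m invmx V -> PiTG A P R = V *m Q *m invmx V ->
  ETG A M nu1 nu2 P R =
  V *m ((1%:M - L) ^+ nu2 *m (1%:M - Q) *m (1%:M - L) ^+ nu1) *m invmx V.
Proof.
move=> Vu ML PQ; rewrite /ETG ML PQ !subr_conjmx // !expr_conjmx //.
by rewrite !mulmxA !mulmxKV.
Qed.

Lemma ETG_first_cols (A M Vr Vl : 'M[C]_n) lam (P R : 'M[C]_(n, nc)) nu1 nu2 :
  A \in unitmx -> M \in unitmx -> Vr \in unitmx -> Vl \in unitmx ->
  A *m Vr = M *m Vr *m diag_mx (\row_i lam i) ->
  is_diag_mx (Vl ^t* *m A *m Vr) -> (nc <= n)%N ->
  (P^T == first_cols_span nc Vr)%MS -> (R^T == first_cols_span nc Vl)%MS ->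
  ETG A M nu1 nu2 P R =
  Vr *m diag_mx (\row_i tg_eigen lam (nu1 + nu2) i) *m invmx Vr.
Proof.
move=> Au Mu Vru Vlu AVr Gd ncn PVr RVl.
have ML : invmx M *m A = Vr *m diag_mx (\row_i lam i) *m invmx Vr.
  by rewrite -[A](mulmxK Vru) AVr !mulmxA mulVmx // mul1mx.
rewrite (ETG_similar nu1 nu2 Vru ML (PiTG_first_cols ncn Au Vru Vlu Gd PVr RVl)).
rewrite pid_mx_diag !subr_diag_mx !expr_diag_mx !mulmx_diag; congr (_ *m diag_mx _ *m _).
apply/rowP=> i; rewrite !mxE /tg_eigen exprD.
by case: ltnP => _; rewrite ?subrr ?subr0 ?mulr0 ?mul0r ?mulr1 ?mul1r // mulrC.
Qed.

Lemma tg_rate_max (lam : 'I_n -> C) nu :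
  (forall i j : 'I_n, (i <= j)%N -> `|1 - lam j| <= `|1 - lam i|) -> (0 < n)%N ->
  exists2 i0, (forall i, `|tg_eigen lam nu i| <= tg_rate nc lam nu)
            & `|tg_eigen lam nu i0| = tg_rate nc lam nu.
Proof.
move=> lam_mono n_gt0.
have norm_eigen i : `|tg_eigen lam nu i| = (nc <= i)%N%:R * `|1 - lam i| ^+ nu.
  by rewrite normrM normr_nat normrX.
rewrite /tg_rate; case: insubP => [i1 _ val_i1 | nc_ge_n]; last first.
  have inactive (i : 'I_n) : (nc <= i)%N = false.
    by apply/negbTE; rewrite -ltnNge (leq_trans (ltn_ord i)) // leqNgt.
  by exists (Ordinal n_gt0) => [i|]; rewrite norm_eigen inactive mul0r.
exists i1 => [i|]; rewrite norm_eigen; last by rewrite val_i1 leqnn mul1r.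
case: leqP => [le_nc_i | _]; rewrite ?mul1r ?mul0r ?exprn_ge0 //.
by rewrite lerXn2r ?nnegrE // lam_mono // val_i1.
Qed.

End TwoGridSpectrum.

Section SimilarToDiagonal.
Variables (C : numClosedFieldType) (n : nat).
Implicit Types (V W Z : 'M[C]_n) (y : 'cV[C]_n) (e : 'I_n -> C).

Lemma is_specrad_conj_diag V e (r : C) i0 : V \in unitmx ->
  (forall i, `|e i| <= r) -> `|e i0| = r ->
  is_specrad (V *m diag_mx (\row_i e i) *m invmx V) r.
Proof.
move=> Vu er ei0; split=> [a|].
  by rewrite eigenvalue_conj // eigenvalue_diag_mx => /codomP[i ->].
by exists (e i0); rewrite // eigenvalue_conj // eigenvalue_diag_mx codom_f.
Qed.

Definition l2norm y : C := sqrtC (\sum_i `|y i 0| ^+ 2).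

Lemma vnormN_gram W x : vnormN (W ^t* *m W) x = l2norm (W *m x).
Proof.
rewrite /vnormN /l2norm.
have -> : x ^t* *m (W ^t* *m W) *m x = (W *m x) ^t* *m (W *m x).
  by rewrite trmxC_mul !mulmxA.
by rewrite mxE; congr sqrtC; apply: eq_bigr => i _; rewrite !mxE normCKC.
Qed.

Lemma l2norm_gt0 y : y != 0 -> 0 < l2norm y.
Proof.
move=> ynz; rewrite sqrtC_gt0 lt_def sumr_ge0 ?andbT => [|i _]; last exact: exprn_ge0.
apply: contra ynz => /eqP y0; apply/eqP/matrixP=> i j; rewrite [j]ord1 mxE.
have /eqP : `|y i 0| ^+ 2 = 0 by apply: (psumr_eq0P _ y0) => // k _; exact: exprn_ge0.
by rewrite expf_eq0 normr_eq0 => /andP[_ /eqP].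
Qed.

Lemma l2norm_diag_le e (r : C) y : 0 <= r -> (forall i, `|e i| <= r) ->
  l2norm (diag_mx (\row_i e i) *m y) <= r * l2norm y.
Proof.
move=> r0 er; have sq_ge0 (z : 'cV[C]_n) : 0 <= \sum_i `|z i 0| ^+ 2.
  by apply: sumr_ge0 => i _; exact: exprn_ge0.
rewrite /l2norm -{1}(sqrCK r0) -sqrtCM ?nnegrE ?exprn_ge0 //.
rewrite ler_sqrtC ?nnegrE ?mulr_ge0 ?exprn_ge0 //.
rewrite mulr_sumr ler_sum // => i _; rewrite mul_diag_mx !mxE normrM exprMn.
by rewrite ler_wpM2r ?exprn_ge0 // lerXn2r ?nnegrE.
Qed.

Lemma l2norm_delta (c : C) (i : 'I_n) : l2norm (c *: delta_mx i 0) = `|c|.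
Proof.
rewrite /l2norm (bigD1 i) //= big1 => [|j ji]; last first.
  by rewrite !mxE (negbTE ji) mulr0 normr0 expr0n.
by rewrite !mxE !eqxx mulr1 addr0 sqrCK.
Qed.

Lemma is_opnormN_gram W Z e (r : C) i0 : W \in unitmx ->
  W *m Z = diag_mx (\row_i e i) *m W -> (forall i, `|e i| <= r) -> `|e i0| = r ->
  is_opnormN (W ^t* *m W) Z r.
Proof.
move=> Wu WZ er ei0; have r0 : 0 <= r by rewrite -ei0.
have WZx (x : 'cV[C]_n) : W *m (Z *m x) = diag_mx (\row_i e i) *m (W *m x).
  by rewrite !mulmxA WZ.
split=> [x xnz|].
  have Wx_gt0 : 0 < l2norm (W *m x).
    by apply/l2norm_gt0; apply: contra xnz => /eqP Wx0; rewrite -(mulKmx Wu x) Wx0 mulmx0.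
  by rewrite !vnormN_gram WZx ler_pdivrMr // l2norm_diag_le.
set d : 'cV[C]_n := delta_mx i0 0.
have d_eig : diag_mx (\row_i e i) *m d = e i0 *: d.
  apply/matrixP=> i j; rewrite mul_diag_mx !mxE.
  by case: eqP => [->|_]; rewrite ?mulr0.
exists (invmx W *m d).
  apply: contraTneq isT => /(congr1 (mulmx W)); rewrite mulKVmx // mulmx0.
  by move/matrixP/(_ i0 0); rewrite !mxE !eqxx => /eqP; rewrite oner_eq0.
rewrite !vnormN_gram WZx mulKVmx // d_eig /d l2norm_delta -[delta_mx i0 0]scale1r.
by rewrite l2norm_delta normr1 divr1.
Qed.

End SimilarToDiagonal.

Theorem theorem3p3 (C : numClosedFieldType) (n nc : nat)
  (A M Vr Vl : 'M[C]_n) (lam : 'I_n -> C) (u : 'I_n -> C)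
  (Psh Rsh : 'M[C]_(n, nc)) :
  A \in unitmx -> M \in unitmx ->
  diagonalizable (invmx M *m A) ->
  diagonalizable (invmx (M ^t*) *m A ^t*) ->
  Vr \in unitmx -> Vl \in unitmx ->
  A *m Vr = M *m Vr *m diag_mx (\row_i lam i) ->
  Vl ^t* *m A = diag_mx (\row_i lam i) *m Vl ^t* *m M ->
  is_diag_mx (Vl ^t* *m A *m Vr) ->
  is_diag_mx (Vl ^t* *m M *m Vr) ->
  (forall i j : 'I_n, (i <= j)%N -> `|1 - lam j| <= `|1 - lam i|) ->
  (1 <= nc <= n)%N ->
  (Psh^T == first_cols_span nc Vr)%MS ->
  (Rsh^T == first_cols_span nc Vl)%MS ->
  (forall j, u j != 0) ->
  let D := diag_mx (\row_j u j) in
  let N := (invmx Vr) ^t* *m D ^t* *m D *m invmx Vr in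
  forall nu1 nu2 : nat,
  let E := ETG A M nu1 nu2 Psh Rsh in
  let v := tg_rate nc lam (nu1 + nu2) in
  [/\ is_specrad E v,
      (forall k : nat, (1 <= k)%N ->
         exists2 c : C, is_opnormN N (E ^+ k) c & k.-root c = v)
    & is_opnormN N E v].
Proof.
move=> Au Mu _ _ Vru Vlu AVr _ Gd _ lam_mono /andP[nc_gt0 ncn] PVr RVl u_neq0.
move=> D N nu1 nu2 E v; set e := tg_eigen nc lam (nu1 + nu2).
have defE : E = Vr *m diag_mx (\row_i e i) *m invmx Vr.
  exact: ETG_first_cols Au Mu Vru Vlu AVr Gd ncn PVr RVl.
have [i0 e_le e_max] := tg_rate_max nc (nu1 + nu2) lam_mono (leq_trans nc_gt0 ncn).
have v_ge0 : 0 <= v by rewrite /v -e_max.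
set W := D *m invmx Vr.
have defN : N = W ^t* *m W by rewrite /N /W trmxC_mul !mulmxA.
have E_opnorm k : is_opnormN N (E ^+ k) (v ^+ k).
  rewrite defN; apply: (is_opnormN_gram (e := fun i => e i ^+ k) (i0 := i0)).
  - by rewrite unitmx_mul diag_mx_unit ?unitmx_inv.
  - rewrite defE expr_conjmx // expr_diag_mx /W /D !mulmxA mulmxKV //.
    by rewrite diag_mxC.
  - by move=> i; rewrite normrX lerXn2r ?nnegrE.
  - by rewrite normrX e_max.
split=> [|k k_gt0|]; last by have := E_opnorm 1%N; rewrite !expr1.
  by rewrite defE; apply: is_specrad_conj_diag e_max.
by exists (v ^+ k); rewrite ?exprCK.
Qed.
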